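(* Let $n$ and $m$ be non-negative integers with $m\leq\binom{n}{2}$. Let $d$ and $\ell$ be the unique integers with $m=\binom{d}{2}+\ell$, $d\geq 1$ and $0\leq \ell\leq d-1$. Then the maximum of $c(G)$ over all graphs $G$ with $n$ vertices and $m$ edges equals $2^d+2^\ell+n-d-1$.
   Context: All graphs are finite, simple and undirected. A clique of a graph $G$ is a (possibly empty) set of pairwise adjacent vertices; in particular $\emptyset$ is a clique, every single vertex is a clique, and every edge is a clique. $c(G)$ denotes the number of cliques of $G$. *)

From mathcomp Require Import all_boot.
Set Implicit Arguments. Unset Strict Implicit. Unset Printing Implicit Defensive.

Definition simple_graph (n : nat) (e : rel 'I_n) : Prop :=
  irreflexive e /\ symmetric e.

Definition is_clique (n : nat) (e : rel 'I_n) (A : {set 'I_n}) : bool :=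
  [forall x in A, forall y in A, (x != y) ==> e x y].

(* c(G): the number of cliques of G (including the empty clique). *)
Definition num_cliques (n : nat) (e : rel 'I_n) : nat :=
  #|[set A : {set 'I_n} | is_clique e A]|.

Definition num_edges (n : nat) (e : rel 'I_n) : nat :=
  #|[set E : {set 'I_n} | (#|E| == 2) && is_clique e E]|.

From mathcomp Require Import all_boot zify.
Set Implicit Arguments. Unset Strict Implicit. Unset Printing Implicit Defensive.

(* Upper bound, by induction on m: let v be a vertex of least positive degree
   k.  Deleting the k edges at v kills exactly the cliques through v other than
   {v}, i.e. at most 2^k - 1 of them.  The k + 1 vertices of the closed
   neighbourhood of v all have degree at least k, so k(k+1) <= 2m, which forces
   k <= d - 1, and an exponential inequality shows that the bound for m - k
   edges plus 2^k - 1 stays below the bound for m.  The bound is attained by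
   the colex graph: K_d plus a vertex joined to l of its vertices. *)

Definition isolate n (e : rel 'I_n) (v : 'I_n) : rel 'I_n :=
  fun x y => [&& e x y, x != v & y != v].

Definition neighbours n (e : rel 'I_n) (v : 'I_n) : {set 'I_n} := [set u | e v u].

Definition edge_set n (e : rel 'I_n) : {set {set 'I_n}} :=
  [set E : {set 'I_n} | (#|E| == 2) && is_clique e E].

Definition neighbourhood_cliques n (e : rel 'I_n) (v : 'I_n) : {set {set 'I_n}} :=
  [set B : {set 'I_n} | (B \subset neighbours e v) && is_clique e B].

Lemma num_edgesE n (e : rel 'I_n) : num_edges e = #|edge_set e|.
Proof. by []. Qed.

Lemma cliqueP n (e : rel 'I_n) (A : {set 'I_n}) :
  reflect {in A &, forall x y, x != y -> e x y} (is_clique e A).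
Proof.
apply: (iffP forallP) => [cA x y xA yA | cA x].
  by move: (cA x); rewrite xA /= => /forallP/(_ y); rewrite yA /= => /implyP.
by apply/implyP => xA; apply/forallP => y; apply/implyP => yA; apply/implyP/cA.
Qed.

Lemma eq_is_clique n (e e' : rel 'I_n) : e =2 e' -> is_clique e =1 is_clique e'.
Proof.
move=> ee' A; apply/cliqueP/cliqueP => cA x y xA yA xy.
  by rewrite -ee'; apply: cA.
by rewrite ee'; apply: cA.
Qed.

Lemma eq_num_cliques n (e e' : rel 'I_n) : e =2 e' -> num_cliques e = num_cliques e'.
Proof. by move=> ee'; apply: eq_card => A; rewrite !inE (eq_is_clique ee'). Qed.

Lemma eq_num_edges n (e e' : rel 'I_n) : e =2 e' -> num_edges e = num_edges e'.
Proof. by move=> ee'; apply: eq_card => A; rewrite !inE (eq_is_clique ee'). Qed.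

Lemma is_clique_small n (e : rel 'I_n) (A : {set 'I_n}) : #|A| <= 1 -> is_clique e A.
Proof.
by move/card_le1_eqP=> A_small; apply/cliqueP => x y xA yA; rewrite (A_small x y) ?eqxx.
Qed.

Section SimpleGraph.

Variables (n : nat) (e : rel 'I_n).
Hypothesis e_simple : simple_graph e.

Lemma simple_isolate v : simple_graph (isolate e v).
Proof.
case: e_simple => irr sym; split => [x | x y]; first by rewrite /isolate irr.
by rewrite /isolate sym; congr (_ && _); rewrite andbC.
Qed.

Lemma neighbours_notin v (B : {set 'I_n}) : B \subset neighbours e v -> v \notin B.
Proof. by case: e_simple => irr _ /subsetP sB; apply/negP => /sB; rewrite inE irr. Qed.

Lemma is_clique_isolate v (A : {set 'I_n}) :
  v \notin A -> is_clique (isolate e v) A = is_clique e A.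
Proof.
move=> vA; apply/cliqueP/cliqueP => cA x y xA yA xy.
  by case/and3P: (cA x y xA yA xy).
by rewrite /isolate cA //=; apply/andP; split; apply: contraNneq vA => <-.
Qed.

Lemma isolate_clique_mem v (A : {set 'I_n}) :
  is_clique (isolate e v) A -> v \in A -> A = [set v].
Proof.
move/cliqueP=> cA vA; apply/setP => x; rewrite inE; apply/idP/eqP => [xA | -> //].
apply/eqP; apply: contraT => xv; have := cA v x vA xA.
by rewrite eq_sym xv /isolate eqxx andbF => /(_ isT).
Qed.

Lemma is_clique_setU1 v (B : {set 'I_n}) : v \notin B ->
  is_clique e (v |: B) = (B \subset neighbours e v) && is_clique e B.
Proof.
case: e_simple => _ sym vB; apply/cliqueP/andP => [cA | [/subsetP sB /cliqueP cB] x y].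
  split; last by apply/cliqueP => x y xB yB; apply: cA; rewrite setU1r.
  apply/subsetP => u uB; rewrite inE cA ?setU11 ?setU1r //.
  by apply: contraNneq vB => ->.
rewrite !in_setU1 => /predU1P[-> | xB] /predU1P[-> | yB]; rewrite ?eqxx // => xy.
- by have := sB y yB; rewrite inE.
- by have := sB x xB; rewrite inE sym.
- exact: cB.
Qed.

Lemma num_cliques_isolate v :
  num_cliques e + 1 = num_cliques (isolate e v) + #|neighbourhood_cliques e v|.
Proof.
set P := [set A : {set 'I_n} | v \in A].
rewrite /num_cliques -(cardsID P [set A | is_clique e A])
  -(cardsID P [set A | is_clique (isolate e v) A]).
have -> : [set A | is_clique (isolate e v) A] :\: P = [set A | is_clique e A] :\: P.
  by apply/setP => A; rewrite !inE; case vA: (v \in A); rewrite // is_clique_isolate ?vA.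
have -> : [set A | is_clique (isolate e v) A] :&: P = [set [set v]].
  apply/setP => A; rewrite !inE; apply/andP/eqP => [[cA vA] | ->].
    exact: isolate_clique_mem.
  by rewrite set11 is_clique_small ?cards1.
have -> : [set A | is_clique e A] :&: P
          = (fun B => v |: B) @: neighbourhood_cliques e v.
  apply/setP => A; rewrite !inE; apply/andP/imsetP => [[cA vA] | [B]].
    exists (A :\ v); last by rewrite setD1K.
    by rewrite inE -is_clique_setU1 ?setD11 // setD1K.
  rewrite inE => /andP[sB cB] ->.
  by rewrite setU11 is_clique_setU1 ?sB ?cB // neighbours_notin.
rewrite cards1 card_in_imset => [|B1 B2]; first by rewrite addnC addnCA addnC.
rewrite /neighbourhood_cliques !inE.
move=> /andP[/neighbours_notin vB1 _] /andP[/neighbours_notin vB2 _] eqB.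
by rewrite -(setU1K vB1) -(setU1K vB2) eqB.
Qed.

Lemma edge_set_at v :
  edge_set e :&: [set E : {set 'I_n} | v \in E] = (fun u => [set v; u]) @: neighbours e v.
Proof.
case: e_simple => irr sym; apply/setP => E; rewrite !inE; apply/andP/imsetP.
  case=> /andP[/cards2P[x [y [xy ->]]] /cliqueP cE].
  rewrite !inE => /pred2P[] vE; subst v.
    by exists y; rewrite ?inE ?cE ?inE ?eqxx ?orbT.
  by exists x; rewrite 1?setUC ?inE ?cE ?inE ?eqxx ?orbT // eq_sym.
case=> u; rewrite inE => vu ->; rewrite !inE eqxx; split => //.
have v_neq_u : v != u by apply: contraTneq vu => ->; rewrite irr.
rewrite cards2 v_neq_u; apply/cliqueP => x y; rewrite !inE.
by move=> /pred2P[]-> /pred2P[]->; rewrite ?eqxx // sym.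
Qed.

Lemma card_edge_set_at v :
  #|edge_set e :&: [set E : {set 'I_n} | v \in E]| = #|neighbours e v|.
Proof.
rewrite edge_set_at card_in_imset // => u1 u2 _ _ eq_u.
have : u1 \in [set v; u2] by rewrite -eq_u !inE eqxx orbT.
have : u2 \in [set v; u1] by rewrite eq_u !inE eqxx orbT.
by rewrite !inE => /pred2P[-> | -> //] /pred2P[->|].
Qed.

Lemma edge_set_isolate v :
  edge_set (isolate e v) = edge_set e :\: [set E : {set 'I_n} | v \in E].
Proof.
apply/setP => E; rewrite !inE; case: (boolP (v \in E)) => [vE | vE] /=.
  apply/negP => /andP[/eqP E2 /isolate_clique_mem/(_ vE) E1].
  by rewrite E1 cards1 in E2.
by rewrite is_clique_isolate.
Qed.

Lemma num_edges_isolate v : num_edges e = num_edges (isolate e v) + #|neighbours e v|.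
Proof. by rewrite -card_edge_set_at !num_edgesE edge_set_isolate addnC cardsID. Qed.

Lemma handshake : \sum_x #|neighbours e x| = 2 * num_edges e.
Proof.
have card_at x : #|neighbours e x| = \sum_(E in edge_set e) (x \in E).
  rewrite -card_edge_set_at -sum1_card big_mkcond [RHS]big_mkcond.
  apply: eq_bigr => E _; rewrite in_setI.
  by case: (E \in _); rewrite //= inE; case: (x \in E).
rewrite (eq_bigr _ (fun x _ => card_at x)) exchange_big num_edgesE -sum1_card big_distrr.
apply: eq_bigr => E; rewrite inE => /andP[/eqP E2 _].
rewrite /= muln1 -E2 -sum1_card [RHS]big_mkcond.
by apply: eq_bigr => x _; case: (x \in E).
Qed.

Lemma exists_min_degree : 0 < num_edges e ->
  exists2 v, 0 < #|neighbours e v|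
           & #|neighbours e v| * #|neighbours e v|.+1 <= 2 * num_edges e.
Proof.
case: e_simple => _ sym m_gt0.
have [x0 deg_x0] : exists x0, 0 < #|neighbours e x0|.
  apply/existsP; apply: contraTT m_gt0; rewrite negb_exists => /forallP deg0.
  have : \sum_x #|neighbours e x| = 0.
    by apply: big1 => x _; apply/eqP; rewrite -leqn0 leqNgt.
  by rewrite handshake; lia.
pose deg x := #|neighbours e x|.
case: (@arg_minnP _ x0 (fun x => 0 < deg x) deg deg_x0) => v deg_v v_min.
exists v => //; set k := #|neighbours e v|.
rewrite -handshake (@leq_trans (\sum_(x in v |: neighbours e v) #|neighbours e x|)) //.
  have cardN : #|v |: neighbours e v| = k.+1 by rewrite cardsU1 neighbours_notin.
  rewrite mulnC -cardN -sum_nat_const; apply: leq_sum => x /setU1P[-> // | xN].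
  by apply: v_min; apply/card_gt0P; exists v; rewrite inE sym; rewrite inE in xN.
by rewrite [X in _ <= X](bigID (mem (v |: neighbours e v))) leq_addr.
Qed.

End SimpleGraph.

Lemma card_sets_le1 n : #|[set A : {set 'I_n} | #|A| <= 1]| = n.+1.
Proof.
set eq0 := [set A : {set 'I_n} | #|A| == 0]; rewrite -(cardsID eq0).
set le1 := [set A : {set 'I_n} | #|A| <= 1].
have -> : le1 :&: eq0 = eq0 by apply/setP => A; rewrite !inE; case: #|A| => [|[]].
have -> : le1 :\: eq0 = [set A : {set 'I_n} | #|A| == 1].
  by apply/setP => A; rewrite !inE; case: #|A| => [|[]].
by rewrite !card_draws card_ord bin0 bin1.
Qed.

Lemma clique_num_edges_gt0 n (e : rel 'I_n) (A : {set 'I_n}) :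
  is_clique e A -> 1 < #|A| -> 0 < num_edges e.
Proof.
move=> /cliqueP cA /card_gt1P[x [y [xA yA xy]]]; rewrite card_gt0; apply/set0Pn.
exists [set x; y]; rewrite inE cards2 xy; apply/cliqueP => a b.
by rewrite !inE => /pred2P[]-> /pred2P[]-> ab; apply: cA.
Qed.

Lemma num_cliques_edgeless n (e : rel 'I_n) : num_edges e = 0 -> num_cliques e = n.+1.
Proof.
move=> m0; rewrite -card_sets_le1; apply: eq_card => A; rewrite !inE.
apply/idP/idP => [cA | /is_clique_small //].
by rewrite leqNgt; apply/negP => /(clique_num_edges_gt0 cA); rewrite m0.
Qed.

Definition clique_bound n d l := 2 ^ d + 2 ^ l + n - d - 1.

Lemma mul2_bin2 d : 2 * 'C(d, 2) = d * d.-1.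
Proof. by elim: d => [// | [// | d] IH]; rewrite binS bin1 mulnDr IH /=; lia. Qed.

Lemma leq_mul_add_swap x u w : 0 < x -> u <= w -> x * u + w <= x * w + u.
Proof. by move=> x_gt0 uw; nia. Qed.

(* Deleting the edges at a vertex of degree [k] changes the bound by at least
   [2 ^ k - 1]: either [l] drops by [k], or [d] drops by one and [l] becomes
   [d - 1 - k + l]. *)
Lemma clique_bound_step n d l k : 0 < d -> l <= d - 1 -> 0 < k -> k <= d - 1 ->
  exists d' l', [/\ 'C(d, 2) + l - k = 'C(d', 2) + l', 0 < d', l' <= d' - 1
                  & clique_bound n d' l' + 2 ^ k <= clique_bound n d l + 1].
Proof.
rewrite /clique_bound => d_gt0 ld k_gt0 kd.
have pow_gt0 i : 0 < 2 ^ i by rewrite expn_gt0.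
have dpow := ltn_expl d (isT : 1 < 2).
have [kl | lk] := leqP k l.
  exists d, (l - k); split => //; try lia.
  have := leq_mul_add_swap (pow_gt0 (l - k)) (pow_gt0 k).
  by rewrite muln1 -expnD subnK //; lia.
exists d.-1, (d.-1 - k + l); split; try lia.
  by case: d d_gt0 {ld dpow} kd => // d _; rewrite binS bin1 /=; lia.
have pow_lk : 2 ^ l <= 2 ^ k by rewrite leq_exp2l // ltnW.
have := leq_mul_add_swap (pow_gt0 (d.-1 - k)) pow_lk.
rewrite -!expnD subnK; last by lia.
have := ltn_expl d.-1 (isT : 1 < 2).
by case: d d_gt0 {ld kd} dpow => // d _; rewrite expnS /=; lia.
Qed.

Lemma leq_degree_bin2 k d l :
  k * k.+1 <= 2 * ('C(d, 2) + l) -> l <= d - 1 -> k <= d - 1.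
Proof. by rewrite mulnDr mul2_bin2; case: d => [|d] /=; nia. Qed.

Lemma card_neighbourhood_cliques n (e : rel 'I_n) v :
  #|neighbourhood_cliques e v| <= 2 ^ #|neighbours e v|.
Proof.
rewrite -card_powerset subset_leq_card //; apply/subsetP => B.
by rewrite !inE => /andP[].
Qed.

Lemma num_cliques_le_bound n (e : rel 'I_n) d l :
  simple_graph e -> num_edges e = 'C(d, 2) + l -> 0 < d -> l <= d - 1 ->
  num_cliques e <= clique_bound n d l.
Proof.
move eq_m: (num_edges e) => m.
elim/ltn_ind: m e d l eq_m => m IH e d l eq_m e_simple eq_md d_gt0 ld.
have [m0 | m_gt0] := posnP m.
  have d1 : d = 1 by have := mul2_bin2 d; nia.
  have l0 : l = 0 by lia.
  by rewrite num_cliques_edgeless ?eq_m // /clique_bound d1 l0 expn1 expn0; lia.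
have [|v deg_v deg_bound] := exists_min_degree e_simple; first by rewrite eq_m.
set k := #|neighbours e v| in deg_v deg_bound.
have kd : k <= d - 1 by apply: (leq_degree_bin2 _ ld); rewrite -eq_md -eq_m.
have [d' [l' [eq_md' d'_gt0 ld' bound_step]]] := clique_bound_step n d_gt0 ld deg_v kd.
have edges_v := num_edges_isolate e_simple v.
have cliques_v := num_cliques_isolate e_simple v.
have card_v : #|neighbourhood_cliques e v| <= 2 ^ k := card_neighbourhood_cliques e v.
have : num_cliques (isolate e v) <= clique_bound n d' l'.
  by apply: (IH (m - k) _ _ _ _ _ (simple_isolate e_simple v)) => //; lia.
lia.
Qed.

(* The first [C(t,2) + s] edges in colex order: a clique on [{0, ..., t-1}]
   together with the vertex [t] joined to [{0, ..., s-1}]. *)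
Definition colex_graph n (t s : nat) : rel 'I_n := fun x y =>
  (x != y) && [|| (x < t) && (y < t), (x == t :> nat) && (y < s)
                | (y == t :> nat) && (x < s)].

Lemma colex_simple n t s : simple_graph (@colex_graph n t s).
Proof.
split => [x | x y]; first by rewrite /colex_graph eqxx.
by rewrite /colex_graph eq_sym; case: (y != x) => //=; lia.
Qed.

Lemma isolate_colex n t s (v : 'I_n) : s <= t -> v = t :> nat ->
  isolate (colex_graph t s) v =2 colex_graph t 0.
Proof. by move=> st vt x y; rewrite /isolate /colex_graph -!val_eqE /= vt; lia. Qed.

Lemma neighbours_colex n t s (v : 'I_n) : s <= t -> v = t :> nat ->
  neighbours (colex_graph t s) v = [set u : 'I_n | u < s].
Proof.
by move=> st vt; apply/setP => u; rewrite !inE /colex_graph -val_eqE /= vt; lia.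
Qed.

Lemma colex_succ n t : @colex_graph n t.+1 0 =2 colex_graph t t.
Proof. by move=> x y; rewrite /colex_graph -val_eqE /=; lia. Qed.

Lemma card_ord_lt n s : s <= n -> #|[set u : 'I_n | u < s]| = s.
Proof.
move=> sn; have widen_inj : injective (widen_ord sn) by move=> i j [] /val_inj.
rewrite -[RHS](card_ord s) -(card_imset _ widen_inj).
apply: eq_card => u; rewrite inE.
apply/idP/imsetP => [us | [i _ ->]]; last exact: (ltn_ord i).
by exists (Ordinal us) => //; apply: val_inj.
Qed.

Lemma colex_step n t s : s <= t < n ->
  num_cliques (@colex_graph n t s) + 1 = num_cliques (@colex_graph n t 0) + 2 ^ s /\
  num_edges (@colex_graph n t s) = num_edges (@colex_graph n t 0) + s.
Proof.
case/andP=> st tn; pose v := Ordinal tn.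
have cliques_N :
    neighbourhood_cliques (colex_graph t s) v = powerset [set u : 'I_n | u < s].
  apply/setP => B; rewrite !inE neighbours_colex //.
  apply/andP/idP => [[] // | sB]; split => //; apply/cliqueP => x y xB yB xy.
  by move: (subsetP sB x xB) (subsetP sB y yB); rewrite !inE /colex_graph xy; lia.
have sn : s <= n by apply: leq_trans (ltnW tn).
have colex_ts := colex_simple n t s.
rewrite (num_cliques_isolate colex_ts v) (num_edges_isolate colex_ts v).
rewrite (eq_num_cliques (isolate_colex st _)) // (eq_num_edges (isolate_colex st _)) //.
by rewrite cliques_N card_powerset neighbours_colex // card_ord_lt.
Qed.

Lemma complete_counts n t : t <= n ->
  num_cliques (@colex_graph n t 0) = 2 ^ t + n - t /\
  num_edges (@colex_graph n t 0) = 'C(t, 2).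
Proof.
elim: t => [_ | t IH tn].
  have edges0 : num_edges (@colex_graph n 0 0) = 0.
    have := handshake (colex_simple n 0 0); rewrite big1 => [|x _]; first lia.
    apply/eqP; rewrite cards_eq0; apply/eqP/setP => y.
    by rewrite !inE /colex_graph; lia.
  by rewrite num_cliques_edgeless // edges0 expn0 add1n subn0.
have [cliques_t edges_t] := IH (ltnW tn).
have [] := @colex_step n t t; first by rewrite leqnn.
rewrite (eq_num_cliques (@colex_succ n t)) (eq_num_edges (@colex_succ n t)).
rewrite cliques_t edges_t binS bin1 expnS => cliques_tt ->; split; last lia.
by have := ltn_expl t (isT : 1 < 2); lia.
Qed.

Lemma colex_counts n t s : s <= t < n ->
  num_cliques (@colex_graph n t s) = clique_bound n t s /\
  num_edges (@colex_graph n t s) = 'C(t, 2) + s.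
Proof.
case/andP=> st tn; have [cliques_t edges_t] := complete_counts (ltnW tn).
have [] := @colex_step n t s; first by rewrite st.
rewrite cliques_t edges_t /clique_bound => cliques_s ->; split => //.
by have := ltn_expl t (isT : 1 < 2); have := expn_gt0 2 s; lia.
Qed.

Lemma exists_extremal_graph n d l :
  'C(d, 2) + l <= 'C(n, 2) -> 0 < d -> l <= d - 1 ->
  exists e : rel 'I_n, [/\ simple_graph e, num_edges e = 'C(d, 2) + l
                        & num_cliques e = clique_bound n d l].
Proof.
move=> m_le d_gt0 ld; have [dn | nd] := ltnP d n.
  have [] := @colex_counts n d l; first by rewrite dn andbT; lia.
  by exists (colex_graph d l); split; first exact: colex_simple.
(* Otherwise [m = C(n, 2)] and the complete graph is the only candidate. *)
have [l0 dn] : l = 0 /\ (d = n \/ n = 0 /\ d = 1).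
  by move: m_le; rewrite -(leq_pmul2l (isT : 0 < 2)) mulnDr !mul2_bin2; nia.
have [cliques_n edges_n] := @complete_counts n n (leqnn n).
exists (colex_graph n 0); split; first exact: colex_simple.
  by rewrite edges_n l0 addn0; case: dn => [-> | [-> ->]].
by rewrite cliques_n /clique_bound l0 expn0; case: dn => [-> | [-> ->]]; lia.
Qed.

Theorem theorem2 (n m d l : nat) :
  m <= 'C(n, 2) -> m = 'C(d, 2) + l -> 1 <= d -> l <= d - 1 ->
  (exists e : rel 'I_n, simple_graph e /\ num_edges e = m /\
     num_cliques e = 2 ^ d + 2 ^ l + n - d - 1) /\
  (forall e : rel 'I_n, simple_graph e -> num_edges e = m ->
     num_cliques e <= 2 ^ d + 2 ^ l + n - d - 1).
Proof.
move=> m_le eq_m d_gt0 ld; subst m; split => [|e e_simple edges_e].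
  have [e [e_simple edges_e cliques_e]] := exists_extremal_graph m_le d_gt0 ld.
  by exists e.
exact: num_cliques_le_bound.
Qed.
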